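(* Let $C$ and $Q_1,\dots,Q_k$ ($k\ge0$) be subsets of $\{1,\dots,n\}$, let $W_i\subseteq Q_i$ for $1\le i\le k$, and let $Q=\bigcup_{i=1}^kQ_i$. Let $A_1,\dots,A_r\subseteq\{1,\dots,k\}$ ($r\le k$) be pairwise disjoint, and let $G_j=\bigcup_{i\in A_j}W_i$ for $1\le j\le r$. Let $R$ be any subset of $Q\setminus\bigcup_{j=1}^rG_j$. For a given joint distribution of $X_1,\dots,X_n$, if $K_1=(C,\langle Q_i,1\le i\le k\rangle)$ is valid, then $K_2(R)=(C\cup R,\langle G_j,1\le j\le r\rangle)$ is valid.
   Context: $X_1,\dots,X_n$ are jointly distributed discrete random variables with $H(X_i)<\infty$; $X_\alpha=(X_i,i\in\alpha)$, $X_\emptyset$ is a constant. A CMI $(C,\langle Q_1,\dots,Q_k\rangle)$ (with $C\subseteq\{1,\dots,n\}$ and an unordered multiset of subsets $Q_i$) is valid for a given distribution if $\sum_{i=1}^kH(X_{Q_i}|X_C)-H(X_{Q_1},\dots,X_{Q_k}|X_C)=0$, i.e., $X_{Q_1},\dots,X_{Q_k}$ are mutually independent conditioning on $X_C$ (automatically true when $k\le1$). *)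

From HB Require Import structures.
From mathcomp Require Import all_boot all_order all_algebra.
From mathcomp Require Import classical_sets boolp reals constructive_ereal ereal esum exp.
Set Implicit Arguments. Unset Strict Implicit. Unset Printing Implicit Defensive.
Import Order.TTheory GRing.Theory Num.Theory.
Local Open Scope classical_set_scope.
Local Open Scope ring_scope.

(* A joint outcome of X_1,...,X_n: a vector of values in a common countable
   alphabet T (indices are 'I_n, i.e. {0,...,n-1}). *)
Definition outcome (n : nat) (T : countType) := {ffun 'I_n -> T}.

Definition is_pmf (R : realType) (n : nat) (T : countType)
  (p : outcome n T -> R) : Prop :=
  (forall x, 0 <= p x) /\ (\esum_(x in [set: outcome n T]) (p x)%:E = 1%E).

Definition prob (R : realType) (n : nat) (T : countType)
  (p : outcome n T -> R) (E : set (outcome n T)) : R :=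
  fine (\esum_(x in E) (p x)%:E).

Definition agree (n : nat) (T : countType) (alpha : {set 'I_n})
  (y : outcome n T) : set (outcome n T) :=
  [set x | forall i, i \in alpha -> x i = y i].

(* The CMI (C, <Q_1,...,Q_k>) is valid for p: X_{Q_1},...,X_{Q_k} are
   mutually independent conditionally on X_C, i.e. for all values c of X_C
   and a_i of X_{Q_i}:
     P(c, a_1,...,a_k) * P(c)^k = P(c) * prod_i P(c, a_i)
   (the denominator-free form of P(a_1..a_k | c) = prod_i P(a_i | c) whenever
   P(c) > 0; it is trivially true when k <= 1). *)
Definition cmi_valid (R : realType) (n : nat) (T : countType)
  (p : outcome n T -> R) (C : {set 'I_n}) (k : nat)
  (Q : 'I_k -> {set 'I_n}) : Prop :=
  forall (c : outcome n T) (a : 'I_k -> outcome n T),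
    prob p (agree C c `&` [set x | forall i, agree (Q i) (a i) x])
      * prob p (agree C c) ^+ k
    = prob p (agree C c) * \prod_(i < k) prob p (agree C c `&` agree (Q i) (a i)).

(* Shannon entropy (natural log) of the single variable X_i, as an extended
   real; ln 0 = 0 in MathComp-Analysis so 0 ln 0 = 0. *)
Definition entropy1 (R : realType) (n : nat) (T : countType)
  (p : outcome n T -> R) (i : 'I_n) : \bar R :=
  \esum_(v in [set: T])
     (- (prob p [set x | x i = v] * ln (prob p [set x | x i = v])))%:E.

Definition finite_entropies (R : realType) (n : nat) (T : countType)
  (p : outcome n T -> R) : Prop :=
  forall i : 'I_n, (entropy1 p i < +oo)%E.

From HB Require Import structures.
From mathcomp Require Import all_boot all_order all_algebra.
From mathcomp Require Import classical_sets boolp reals constructive_ereal ereal esum exp fsbigop.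
From mathcomp Require Import ring.
Set Implicit Arguments. Unset Strict Implicit. Unset Printing Implicit Defensive.
Import Order.TTheory GRing.Theory Num.Theory.

(* Validity of (C, <Q_1, ..., Q_k>) is the product rule
     P(B /\ F_1 /\ ... /\ F_k) P(B)^k = P(B) P(B /\ F_1) ... P(B /\ F_k)
   for B = {X_C = c} and the atoms F_i = {X_{Q_i} = a_i}.  Both sides are
   additive in each F_i, and an event depending only on X_{Q_i} is a disjoint
   union of atoms, so the rule holds for all such events F_i.
   As R is covered by the Q_i, {X_{C u R} = c} is B intersected with the events
   {X_{R n Q_i} = c}; as the A_j are disjoint, {X_{G_j} = a_j} is the
   intersection over i in A_j of the events {X_{W_i} = a_j}.  All of these
   depend on one X_{Q_i} only, and applying the extended product rule to the
   joint event, to the new conditioning event and to each group, then dividing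
   by powers of P(B), gives validity of (C u R, <G_1, ..., G_r>). *)

Section ProductAlgebra.
Local Open Scope ring_scope.

Lemma mul_prod_const_but_one (F : comNzRingType) r (f : 'I_r -> F) (j0 : 'I_r) (e d : F) :
  f j0 = e -> (forall j, j != j0 -> f j = d) -> e * d ^+ r = d * \prod_(j < r) f j.
Proof.
move=> fj0 f_other; rewrite (bigD1 j0) //= fj0 (eq_bigr (fun=> d) f_other).
have -> : d ^+ r = \prod_(j < r) d by rewrite prodr_const card_ord.
by rewrite (bigD1 j0) //= mulrCA.
Qed.

Lemma regroup_products (F : fieldType) k r (m x y : F) (z : 'I_r -> F)
    (e d : 'I_k -> F) (f : 'I_r -> 'I_k -> F) :
  m != 0 ->
  x * m ^+ k = m * \prod_(i < k) e i ->
  y * m ^+ k = m * \prod_(i < k) d i ->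
  (forall j, z j * m ^+ k = m * \prod_(i < k) f j i) ->
  (forall i, e i * d i ^+ r = d i * \prod_(j < r) f j i) ->
  x * y ^+ r = y * \prod_(j < r) z j.
Proof.
move=> m_neq0 xE yE zE edf; set M := m ^+ k.
apply: (mulIf (expf_neq0 r.+1 (expf_neq0 k m_neq0))); rewrite -/M.
have -> : x * y ^+ r * M ^+ r.+1 = (x * M) * (y * M) ^+ r by rewrite exprMn exprS; ring.
have -> : y * \prod_(j < r) z j * M ^+ r.+1 = (y * M) * \prod_(j < r) (z j * M).
  by rewrite big_split /= prodr_const card_ord exprS; ring.
rewrite xE yE (eq_bigr _ (fun j _ => zE j)) big_split /= prodr_const card_ord.
have -> : \prod_(j < r) \prod_(i < k) f j i = \prod_(i < k) \prod_(j < r) f j i.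
  exact: exchange_big.
rewrite exprMn -prodrXl.
transitivity (m * m ^+ r * \prod_(i < k) (e i * d i ^+ r)).
  by rewrite big_split mulrACA.
by rewrite (eq_bigr _ (fun i _ => edf i)) big_split mulrACA.
Qed.

End ProductAlgebra.

Section Events.
Variables (n : nat) (T : countType).
Local Open Scope classical_set_scope.

Definition depends_on (S : {set 'I_n}) (F : set (outcome n T)) :=
  forall x y : outcome n T, (forall i, i \in S -> x i = y i) -> F x -> F y.

Lemma agree_depends_on (S Q : {set 'I_n}) (a : outcome n T) :
  S \subset Q -> depends_on Q (agree S a).
Proof. by move=> SQ x y xy ax i iS; rewrite -xy ?ax // (fintype.subsetP SQ). Qed.

Lemma agree_setU_cover (C S : {set 'I_n}) k (Q : 'I_k -> {set 'I_n}) (c : outcome n T) :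
  S \subset (\bigcup_(i < k) Q i)%SET ->
  agree (C :|: S) c = agree C c `&` [set x | forall i, agree (S :&: Q i) c x].
Proof.
move=> SQ; apply/seteqP; split => x /=.
  move=> xc; split => [u uC | i u /setIP[uS _]]; apply: xc; by rewrite inE ?uC ?uS ?orbT.
move=> [xC xS] u /setUP[uC | uS]; first exact: xC.
by have /bigcupP[i _ uQ] := fintype.subsetP SQ u uS; apply: (xS i); rewrite inE uS.
Qed.

Lemma agree_bigcup (I : finType) (P : {set I}) (W : I -> {set 'I_n}) (a : outcome n T) :
  agree (\bigcup_(i in P) W i)%SET a = [set x | forall i, i \in P -> agree (W i) a x].
Proof.
apply/seteqP; split => x /= xa => [i iP u uW | u /bigcupP[i iP uW]].
  by apply: xa; apply/bigcupP; exists i.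
exact: xa i iP u uW.
Qed.

End Events.

Section ProductRule.
Variables (R : realType) (n : nat) (T : countType) (p : outcome n T -> R).
Hypothesis pmf_p : is_pmf p.
Local Open Scope classical_set_scope.
Local Open Scope ring_scope.

Definition product_rule (B : set (outcome n T)) k (F : 'I_k -> set (outcome n T)) :=
  prob p (B `&` [set x | forall i, F i x]) * prob p B ^+ k
  = prob p B * \prod_(i < k) prob p (B `&` F i).

Let p_ge0 x : 0 <= p x. Proof. by case: pmf_p. Qed.

Lemma esumZl (I : choiceType) (D : set I) (a : I -> \bar R) (c : R) :
  0 <= c -> (forall i, 0 <= a i)%E ->
  \esum_(i in D) (c%:E * a i)%E = (c%:E * \esum_(i in D) a i)%E.
Proof.
move=> c_ge0 a_ge0; rewrite /esum -ereal_supZl //; last first.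
  by apply/set0P; exists 0%E; exists set0; [exact: fsets_set0 | rewrite fsbig_set0].
congr ereal_sup; rewrite image_comp; apply: eq_imagel => F _ /=.
by rewrite ge0_mule_fsumr.
Qed.

Lemma esum_prob E : \esum_(x in E) (p x)%:E = (prob p E)%:E.
Proof.
have esum_ge0 : (0 <= \esum_(x in E) (p x)%:E)%E.
  by apply: esum_ge0 => x _; rewrite lee_fin.
have esum_le1 : (\esum_(x in E) (p x)%:E <= 1)%E.
  rewrite -pmf_p.2 esum_mkcond [leRHS]esum_mkcond; apply: le_esum => x _.
  by rewrite in_setT; case: ifP; rewrite lee_fin.
by rewrite /prob fineK // ge0_fin_numE // (le_lt_trans esum_le1 (ltry _)).
Qed.

Lemma prob_ge0 E : 0 <= prob p E.
Proof. by rewrite /prob fine_ge0 // esum_ge0 // => x _; rewrite lee_fin. Qed.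

Lemma le_prob E F : E `<=` F -> prob p E <= prob p F.
Proof.
move=> EF; rewrite -lee_fin -!esum_prob esum_mkcond [leRHS]esum_mkcond.
apply: le_esum => x _; case: ifPn => [/set_mem/EF/mem_set -> // | _].
by case: ifP; rewrite lee_fin.
Qed.

(* The atoms of [F] are indexed by representatives agreeing with [d] outside [S]. *)
Lemma esum_agree_partition (S : {set 'I_n}) F (d : outcome n T) X :
  depends_on S F ->
  \esum_(x in X `&` F) (p x)%:E =
  \esum_(b in [set b | F b /\ forall i, i \notin S -> b i = d i])
    \esum_(x in X `&` agree S b) (p x)%:E.
Proof.
move=> dF; rewrite esum_esum; last by move=> *; rewrite lee_fin.
apply: (reindex_esum _ _ snd); split.
- move=> [b x] /= [[Fb _] [Xx xb]]; split => //.
  by apply: (dF b) => // i iS; rewrite xb.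
- move=> [b x] [b' x'] /set_mem[/= [_ db] [_ xb]] /set_mem[/= [_ db'] [_ xb']] /= x_eq.
  subst x'; congr pair; apply/ffunP => i.
  by case: (boolP (i \in S)) => iS; [rewrite -xb // -xb' | rewrite db // db'].
- move=> x [Xx Fx]; exists ([ffun i => if i \in S then x i else d i], x) => //.
  split; split => //=.
  + by apply: (dF x) => // i iS; rewrite ffunE iS.
  + by move=> i /negPf iS; rewrite ffunE iS.
  + by move=> i iS; rewrite ffunE iS.
Qed.

Lemma product_rule_null B k (F : 'I_k -> set (outcome n T)) :
  prob p B = 0 -> product_rule B F.
Proof.
move=> B0; rewrite /product_rule B0 mul0r.
suff -> : prob p (B `&` [set x | forall i, F i x]) = 0 by rewrite mul0r.
by apply/eqP; rewrite eq_le prob_ge0 andbT -B0 le_prob.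
Qed.

(* Both sides of the product rule are additive in the [i0]-th event. *)
Lemma product_rule_refine B k (S : {set 'I_n}) (i0 : 'I_k) (F : 'I_k -> set (outcome n T)) :
  depends_on S (F i0) ->
  (forall b, product_rule B (fun i => if i == i0 then agree S b else F i)) ->
  product_rule B F.
Proof.
move=> dF rule_b; have [B0|/set0P[d _]] := eqVneq B set0.
  by apply: product_rule_null; rewrite B0 /prob esum_set0.
rewrite /product_rule; set m := prob p B.
pose X := B `&` [set x | forall i, i != i0 -> F i x].
pose K := m * \prod_(i < k | i != i0) prob p (B `&` F i).
have K_ge0 : 0 <= K by rewrite mulr_ge0 ?prob_ge0 // prodr_ge0 // => *; exact: prob_ge0.
have capF : B `&` [set x | forall i, F i x] = X `&` F i0.
  apply/seteqP; split => x /= => [[Bx Fx] | [[Bx Fx] F0x]].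
    by split; [split => // i _ |]; apply: Fx.
  by split => // i; case: (eqVneq i i0) => [-> | /Fx].
have rule_atom b : prob p (X `&` agree S b) * m ^+ k = K * prob p (B `&` agree S b).
  have -> : X `&` agree S b =
            B `&` [set x | forall i, (if i == i0 then agree S b else F i) x].
    apply/seteqP; split => x /= => [[[Bx Fx] bx] | [Bx Fx]].
      by split => // i; case: eqP => // /eqP; apply: Fx.
    split; last by move: (Fx i0); rewrite eqxx.
    by split => // i /negPf i_neq; move: (Fx i); rewrite i_neq.
  rewrite rule_b (bigD1 i0) //= eqxx (eq_bigr (fun i => prob p (B `&` F i))).
    by rewrite mulrCA mulrC.
  by move=> i /negPf ->.
rewrite (bigD1 i0) //= mulrCA -/K capF mulrC [RHS]mulrC; apply: EFin_inj.
rewrite EFinM [RHS]EFinM -!esum_prob !(esum_agree_partition d _ dF) -!esumZl //.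
- by apply: eq_esum => b _; rewrite !esum_prob -!EFinM mulrC rule_atom.
- by move=> b; apply: esum_ge0 => x _; rewrite lee_fin.
- by rewrite exprn_ge0 // prob_ge0.
- by move=> b; apply: esum_ge0 => x _; rewrite lee_fin.
Qed.

Lemma product_rule_depends B k (Q : 'I_k -> {set 'I_n}) (F : 'I_k -> set (outcome n T)) :
  (forall a, product_rule B (fun i => agree (Q i) (a i))) ->
  (forall i, depends_on (Q i) (F i)) -> product_rule B F.
Proof.
move=> rule_atoms; suff rule_from t : forall F, (forall i, depends_on (Q i) (F i)) ->
    (forall i : 'I_k, (t <= i)%N -> exists a, F i = agree (Q i) a) -> product_rule B F.
  by move=> dF; apply: (rule_from k) => // i; rewrite leqNgt ltn_ord.
elim: t => [|t IH] {}F dF atomF.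
  have [a Fa] := choice (fun i => atomF i isT).
  by rewrite (funext Fa); apply: rule_atoms.
have [tk | kt] := ltnP t k; last first.
  by apply: IH => // i ti; move: (ltn_ord i); rewrite ltnNge (leq_trans kt ti).
apply: (@product_rule_refine _ _ _ (Ordinal tk) _ (dF _)) => b; apply: IH.
  by move=> i; case: eqP => [-> | _]; [exact: agree_depends_on | exact: dF].
move=> i ti; case: eqP => [-> | i_neq]; first by exists b.
apply: atomF; rewrite ltn_neqAle ti andbT; apply: contra_notN i_neq => /eqP ti_eq.
exact: val_inj.
Qed.

Lemma prob_constraint_at_most_one B D r (P : pred 'I_r) (H : 'I_r -> set (outcome n T)) :
  (forall j j', P j -> P j' -> j = j') ->
  prob p (B `&` (D `&` [set x | forall j, P j -> H j x])) * prob p (B `&` D) ^+ r =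
  prob p (B `&` D) * \prod_(j < r) prob p (B `&` (D `&` [set x | P j -> H j x])).
Proof.
move=> P_uniq; case: (pickP P) => [j0 Pj0 | notP].
  apply: mul_prod_const_but_one (j0) _ _ _ _.
    congr (prob p (B `&` _)); apply/seteqP; split => x /= [Dx Hx]; split => //.
      by move=> j Pj; rewrite (P_uniq _ _ Pj Pj0); apply: Hx.
    exact: Hx.
  move=> j j_neq; congr (prob p (B `&` _)); apply/seteqP.
  split => x /= => [[] // | Dx]; split => // Pj; case/eqP: j_neq; exact: P_uniq.
under eq_bigr => j _.
  have -> : D `&` [set x | P j -> H j x] = D.
    by apply/seteqP; split => x /= => [[] // | Dx]; split => //; rewrite notP.
  over.
have -> : D `&` [set x | forall j, P j -> H j x] = D.
  by apply/seteqP; split => x /= => [[] // | Dx]; split => // j; rewrite notP.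
by rewrite prodr_const card_ord mulrC.
Qed.

Lemma product_rule_regroup B k (Q : 'I_k -> {set 'I_n}) r (A : 'I_r -> {set 'I_k})
    (D : 'I_k -> set (outcome n T)) (H : 'I_r -> 'I_k -> set (outcome n T)) :
  (forall F, (forall i, depends_on (Q i) (F i)) -> product_rule B F) ->
  (forall j j', j != j' -> [disjoint A j & A j']%B) ->
  (forall i, depends_on (Q i) (D i)) -> (forall j i, depends_on (Q i) (H j i)) ->
  product_rule (B `&` [set x | forall i, D i x])
    (fun j => [set x | forall i, i \in A j -> H j i x]).
Proof.
move=> rule disjA dD dH.
have [B0 | B_neq0] := eqVneq (prob p B) 0.
  apply: product_rule_null; apply/eqP.
  by rewrite eq_le prob_ge0 andbT -B0 le_prob // => x [].
have A_uniq i j j' : i \in A j -> i \in A j' -> j = j'.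
  by move=> ij ij'; apply/eqP; apply: contraLR ij => /disjA/disjointFl ->.
pose E j i := D i `&` [set x | i \in A j -> H j i x].
pose Eall i := D i `&` [set x | forall j, i \in A j -> H j i x].
have dE j i : depends_on (Q i) (E j i).
  by move=> x y xy [Dx Hx]; split; [exact: dD Dx | move=> /Hx; exact: dH].
have dEall i : depends_on (Q i) (Eall i).
  by move=> x y xy [Dx Hx]; split; [exact: dD Dx | move=> j /Hx; exact: dH].
rewrite /product_rule.
have -> : B `&` [set x | forall i, D i x] `&`
          [set x | forall j, [set x | forall i, i \in A j -> H j i x] x] =
          B `&` [set x | forall i, Eall i x].
  apply/seteqP; split => x /= => [[[Bx Dx] Hx] | [Bx DHx]].
    by split => // i; split; [apply: Dx | move=> j; apply: Hx].
  by split; [split => // i; case: (DHx i) | move=> j i /(DHx i).2].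
under eq_bigr => j _.
  have -> : B `&` [set x | forall i, D i x] `&` [set x | forall i, i \in A j -> H j i x] =
            B `&` [set x | forall i, E j i x].
    apply/seteqP; split => x /= => [[[Bx Dx] Hx] | [Bx DHx]].
      by split => // i; split; [apply: Dx | apply: Hx].
    by split; [split => // i; case: (DHx i) | move=> i /(DHx i).2].
  over.
apply: (regroup_products B_neq0 (rule _ dEall) (rule _ dD) (fun j => rule _ (dE j))) => i.
exact: prob_constraint_at_most_one (A_uniq i).
Qed.

End ProductRule.

Theorem mainTheorem12 (R : realType) (n : nat) (T : countType)
  (p : outcome n T -> R) (C : {set 'I_n}) (k : nat)
  (Q W : 'I_k -> {set 'I_n}) (r : nat) (A : 'I_r -> {set 'I_k})
  (Rs : {set 'I_n}) :
  is_pmf p ->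
  finite_entropies p ->
  (forall i, W i \subset Q i) ->
  (r <= k)%N ->
  (forall j j', j != j' -> [disjoint A j & A j']) ->
  Rs \subset (\bigcup_(i < k) Q i) :\: \bigcup_(j < r) \bigcup_(i in A j) W i ->
  cmi_valid p C Q ->
  cmi_valid p (C :|: Rs) (fun j : 'I_r => \bigcup_(i in A j) W i).
Proof.
move=> pmf_p _ WQ _ disjA Rs_sub valid c g.
have Rs_cover : Rs \subset \bigcup_(i < k) Q i.
  exact: fintype.subset_trans Rs_sub (subsetDl _ _).
change (product_rule p (agree (C :|: Rs) c)
          (fun j => agree (\bigcup_(i in A j) W i) (g j))).
rewrite (agree_setU_cover _ _ Rs_cover) (funext (fun j => agree_bigcup _ _ _)).
have rule F : (forall i, depends_on (Q i) (F i)) -> product_rule p (agree C c) F.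
  exact: (product_rule_depends pmf_p (valid c)).
apply: (product_rule_regroup pmf_p rule disjA).
- by move=> i; apply/agree_depends_on/subsetIr.
- by move=> j i; apply/agree_depends_on/WQ.
Qed.
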